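(* Let $\operatorname{Pic}(\operatorname{Spec}\mathbf{Z})$ be the commutative monoid of isomorphism classes of torsion-free rank-1 abelian groups with product induced by $\otimes_{\mathbf{Z}}$ (equivalently, arithmetic divisors $\sum_p n_p[p]$, $n_p\in\mathbf{Z}\cup\{+\infty\}$, $n_p<0$ for finitely many $p$, modulo principal divisors, with addition). Let $\mathcal{P}$ be the set of all subsets $S$ of the set of rational primes, and define $\Theta:\mathcal{P}\to\operatorname{Pic}(\operatorname{Spec}\mathbf{Z})$ by $\Theta(S)=[\mathbf{Z}[1/p\mid p\in S]]$. Then the image of $\Theta$ is exactly the set of idempotent elements of $\operatorname{Pic}(\operatorname{Spec}\mathbf{Z})$. *)

From mathcomp Require Import all_boot all_algebra.
Set Implicit Arguments. Unset Strict Implicit. Unset Printing Implicit Defensive.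
Import GRing.Theory Num.Theory.
Local Open Scope ring_scope.

(* Z u {+oo}: Some n = n, None = +oo *)
Definition zinf := option int.

Definition zinf_add (a b : zinf) : zinf :=
  match a, b with Some x, Some y => Some (x + y) | _, _ => None end.

Definition zinf_neg (a : zinf) : bool := if a is Some x then x < 0 else false.

(* a divisor assigns n_p to each prime p (values at non-primes are ignored) *)
Definition arith_divisor := nat -> zinf.

Definition is_arith_divisor (D : arith_divisor) : Prop :=
  exists s : seq nat, forall p : nat, prime p -> zinf_neg (D p) -> p \in s.

Definition div_add (D E : arith_divisor) : arith_divisor :=
  fun p => zinf_add (D p) (E p).

Definition pval (p : nat) (q : rat) : int :=
  (logn p (absz (numq q)))%:Z - (logn p (absz (denq q)))%:Z.

Definition div_equiv (D E : arith_divisor) : Prop :=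
  exists q : rat, q != 0 /\
    forall p : nat, prime p -> E p = zinf_add (D p) (Some (pval p q)).

(* Theta(S) = [Z[1/p | p in S]]: its divisor is +oo at p in S, 0 elsewhere *)
Definition Theta (S : pred nat) : arith_divisor :=
  fun p => if S p then None else Some 0.

(* Linear equivalence is a congruence for addition because each v_p is a
   homomorphism Q^x -> Z. The divisor of Theta(S) only takes the values 0 and
   +oo, so it is idempotent, and hence so is its class. Conversely, if
   2D = D + div(q), then at each prime p either n_p = +oo or n_p = -v_p(q);
   hence D = Theta(S) + div(1/q) where S is the set of primes with n_p = +oo. *)
From mathcomp Require Import all_boot all_algebra.
From mathcomp Require Import zify.
Set Implicit Arguments. Unset Strict Implicit. Unset Printing Implicit Defensive.
Import GRing.Theory Num.Theory.
Local Open Scope ring_scope.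

Lemma zinf_addC : commutative zinf_add.
Proof. by case=> [a|] [b|] //=; rewrite addrC. Qed.

Lemma zinf_addA : associative zinf_add.
Proof. by case=> [a|] [b|] [c|] //=; rewrite addrA. Qed.

Lemma zinf_addACA : interchange zinf_add zinf_add.
Proof. by move=> a b c d; rewrite -!zinf_addA (zinf_addA b) (zinf_addC b) !zinf_addA. Qed.

Lemma zinf_add0 (a : zinf) : zinf_add a (Some 0) = a.
Proof. by case: a => //= a; rewrite addr0. Qed.

Lemma pval_frac p (a b : int) : a != 0 -> b != 0 ->
  pval p (a%:~R / b%:~R) = (logn p `|a|)%:Z - (logn p `|b|)%:Z.
Proof.
move=> a0 b0; set q := _ / _.
have q0 : q != 0 by rewrite mulf_neq0 ?invr_eq0 ?intr_eq0.
have num_den : numq q * b = a * denq q.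
  apply: (@intr_inj rat); rewrite !intrM.
  have /eqP := divq_num_den q; rewrite eqr_div ?intr_eq0 ?denq_neq0 // => /eqP->.
  by rewrite mulrC.
have := congr1 (fun z => logn p `|z|) num_den.
rewrite !abszM !lognM ?absz_gt0 ?numq_eq0 ?denq_neq0 // => log_eq.
by rewrite /pval; apply/eqP; rewrite subr_eq addrAC eq_sym subr_eq -!PoszD log_eq addnC.
Qed.

Lemma pval1 p : pval p 1 = 0.
Proof. by rewrite /pval logn1 subrr. Qed.

Lemma pvalV p q : pval p q^-1 = - pval p q.
Proof.
have [->|q0] := eqVneq q 0; first by rewrite invr0 /pval logn0 logn1 subrr oppr0.
rewrite -{1}(divq_num_den q) invf_div pval_frac ?denq_neq0 ?numq_eq0 //.
by rewrite /pval opprB.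
Qed.

Lemma pvalM p q r : q != 0 -> r != 0 -> pval p (q * r) = pval p q + pval p r.
Proof.
move=> q0 r0; rewrite -(divq_num_den q) -(divq_num_den r) mulf_div -!intrM.
rewrite pval_frac ?mulf_neq0 ?numq_eq0 ?denq_neq0 // !abszM.
rewrite !lognM ?absz_gt0 ?numq_eq0 ?denq_neq0 // !pval_frac ?numq_eq0 ?denq_neq0 //.
by rewrite !PoszD opprD addrACA.
Qed.

Lemma div_equiv_sym D E : div_equiv D E -> div_equiv E D.
Proof.
case=> q [q0 DE]; exists q^-1; split; first by rewrite invr_eq0.
by move=> p pp; rewrite DE // -zinf_addA /= pvalV subrr zinf_add0.
Qed.

Lemma div_equiv_trans D E F : div_equiv D E -> div_equiv E F -> div_equiv D F.
Proof.
case=> q [q0 DE] [r [r0 EF]]; exists (q * r); split; first by rewrite mulf_neq0.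
by move=> p pp; rewrite EF // DE // -zinf_addA /= pvalM.
Qed.

Lemma div_equiv_add D D' E E' :
  div_equiv D D' -> div_equiv E E' -> div_equiv (div_add D E) (div_add D' E').
Proof.
case=> q [q0 DD'] [r [r0 EE']]; exists (q * r); split; first by rewrite mulf_neq0.
by move=> p pp; rewrite /div_add DD' // EE' // zinf_addACA /= pvalM.
Qed.

Lemma Theta_idem S : div_equiv (div_add (Theta S) (Theta S)) (Theta S).
Proof.
by exists 1; split=> // p _; rewrite /div_add /Theta pval1; case: (S p).
Qed.

Lemma div_idem_Theta D :
  div_equiv (div_add D D) D -> div_equiv (Theta [pred p | D p == None]) D.
Proof.
case=> q [q0 DD]; exists q^-1; split; first by rewrite invr_eq0.
move=> p pp; rewrite /Theta /= pvalV.
have := DD p pp; rewrite /div_add.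
by case: (D p) => [x|] //= [x_eq]; congr Some; lia.
Qed.

Theorem theorem2p16 (D : arith_divisor) (HD : is_arith_divisor D) :
  (exists S : pred nat, div_equiv (Theta S) D) <-> div_equiv (div_add D D) D.
Proof.
split=> [[S ThetaD] | /div_idem_Theta]; last by exists [pred p | D p == None].
have DTheta := div_equiv_sym ThetaD.
apply: (div_equiv_trans (div_equiv_add DTheta DTheta)).
exact: (div_equiv_trans (Theta_idem S) ThetaD).
Qed.
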